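(* Let $L$ be an infinite set and consider the edged cube $\bar Q_L$. A basic sequence is convergent over $f_{\mathrm{solved}}$ if and only if it is universally convergent; consequently the set of basic sequences convergent over $f_{\mathrm{solved}}$, taken modulo $\sim$, is exactly the group $\mathrm{UC}_L=\mathrm{uc}_L/{\sim}$ under the operation induced by concatenation. In particular, let $k=\operatorname{lcm}\{\text{order of }\pi:\pi\in S_{24}\}$; if $f$ is the (legal) terminal configuration obtained by applying a basic sequence of length $\theta$ to $f_{\mathrm{solved}}$, then there is a basic sequence of length at most $\theta\cdot(k-1)$ (ordinal product) which, applied to $f$, has terminal configuration $f_{\mathrm{solved}}$.
   Context: Let $L$ be an infinite set, $-L=\{-r:r\in L\}$ a disjoint copy of $L$, and $0$ a new element; $L^\dagger=-L\cup\{0\}\cup L$ with $-(-r)=r$, $-0=0$. Adjoin $\pm\infty$ with $-(+\infty)=-\infty$ and set $\bar L^\dagger=L^\dagger\cup\{\pm\infty\}$. Points of $U=(\bar L^\dagger)^3$ have coordinates $x,y,z$. The edged cube $\bar Q_L$ is the set of cells $(p,i)$ with $p\in U$, $i\in\{x,y,z\}$, $p_i\in\{\pm\infty\}$ ($i$ marks the face of the cell). For $i\in\{x,y,z\}$, $\alpha\in\bar L^\dagger$, the quarter-turn twist $T_{i,\alpha}$ is the permutation of cells fixing every cell whose point $p$ has $p_i\ne\alpha$ and acting on the others by the rotation $T_{x,\alpha}(\alpha,y,z)=(\alpha,-z,y)$, $T_{y,\alpha}(x,\alpha,z)=(z,\alpha,-x)$, $T_{z,\alpha}(x,y,\alpha)=(-y,x,\alpha)$,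 the marked coordinate being carried along by the rotation. Basic twists are $T,T^2,T^3$ for quarter-turn twists $T$. A basic sequence is a sequence $\langle\sigma_\eta:\eta<\theta\rangle$ of basic twists of ordinal length $\theta$. A labelling is a map $f$ from cells to $X\cup\{\mathrm{NaC}\}$ for a set $X\not\ni\mathrm{NaC}$; it is legal if it never takes value NaC; a configuration is a labelling with $X$ the six colors red, white, green, orange, yellow, blue. The solved configuration $f_{\mathrm{solved}}$ colors cell $(p,i)$ red, blue, white, orange, green, yellow according as $p_i=+\infty$ with $i=x,y,z$, or $p_i=-\infty$ with $i=x,y,z$, respectively. A twist $\sigma$ acts by $(\sigma f)(c)=f(\sigma^{-1}c)$. Applying $\langle\sigma_\eta:\eta<\theta\rangle$ to $f_0$ produces $f_{\eta+1}=\sigma_\eta f_\eta$, and for limit $\lambda\le\theta$, $f_\lambda(c)$ is the eventually constant value of $f_\eta(c)$ ($\eta<\lambda$) if it exists and NaC otherwise; $f_\theta$ is the terminal labelling. The sequence is convergent over $f_0$ if $f_\theta$ is legal, and universally convergent if it is convergent over the identity labelling (each cell labelled by itself). $\vec\sigma\sim\vec\tau$ iff they give the same terminal configuration from every configuration. $\mathrm{uc}_L$ is the set of universally convergent basic sequences under concatenation ($\vec\tau\vec\sigma$ means $\vec\sigma$ then $\vec\tau$), and $\mathrm{UC}_L=\mathrm{uc}_L/{\sim}$. *)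

From Stdlib Require Import ClassicalEpsilon.
From Stdlib Require List.
From mathcomp Require Import all_boot fingroup perm.

Set Implicit Arguments.
Unset Strict Implicit.
Unset Printing Implicit Defensive.

Definition infinite_type (L : Type) : Prop :=
  forall s : list L, exists x : L, ~ List.In x s.

Section Cube.
Variable L : Type.

(* \bar L^dagger = -L u {0} u L u {+oo,-oo} *)
Inductive coord : Type := Pos of L | Neg of L | Zero | PInf | NInf.

Definition cneg (a : coord) : coord :=
  match a with
  | Pos r => Neg r | Neg r => Pos r | Zero => Zero | PInf => NInf | NInf => PInf
  end.

Record pt : Type := Pt { px : coord; py : coord; pz : coord }.

Inductive axis : Type := AX | AY | AZ.

Definition get (p : pt) (i : axis) : coord :=
  match i with AX => px p | AY => py p | AZ => pz p end.

Definition is_inf (a : coord) : Prop := a = PInf \/ a = NInf.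

Record cell : Type := Cell { cpt : pt; cax : axis; cinf : is_inf (get cpt cax) }.

Definition rot (i : axis) (p : pt) : pt :=
  match i with
  | AX => Pt (px p) (cneg (pz p)) (py p)
  | AY => Pt (pz p) (py p) (cneg (px p))
  | AZ => Pt (cneg (py p)) (px p) (pz p)
  end.

(* where the rotation about axis i carries the marked coordinate j *)
Definition swap (i j : axis) : axis :=
  match i, j with
  | AX, AY => AZ | AX, AZ => AY
  | AY, AX => AZ | AY, AZ => AX
  | AZ, AX => AY | AZ, AY => AX
  | _, _ => j
  end.

Definition dec (P : Prop) : {P} + {~ P} := excluded_middle_informative P.

Definition qt_pt (i : axis) (a : coord) (p : pt) : pt :=
  if dec (get p i = a) then rot i p else p.

Definition qt_ax (i : axis) (a : coord) (p : pt) (j : axis) : axis :=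
  if dec (get p i = a) then swap i j else j.

Lemma cneg_inf (a : coord) : is_inf a -> is_inf (cneg a).
Proof. by case=> ->; [right|left]. Qed.

Lemma qt_inf (i : axis) (a : coord) (p : pt) (j : axis) :
  is_inf (get p j) -> is_inf (get (qt_pt i a p) (qt_ax i a p j)).
Proof.
rewrite /qt_pt /qt_ax => H; destruct (dec (get p i = a)) as [e|e]; rewrite /=; last by [].
clear e; destruct i, j; simpl in *; try apply: cneg_inf; exact H.
Qed.

Definition qt_cell (i : axis) (a : coord) (c : cell) : cell :=
  @Cell (qt_pt i a (cpt c)) (qt_ax i a (cpt c) (cax c)) (qt_inf i a (cinf c)).

Inductive pow : Type := Q1 | Q2 | Q3.
Definition pow_nat (m : pow) : nat := match m with Q1 => 1 | Q2 => 2 | Q3 => 3 end.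

Record btwist : Type := BT { bt_axis : axis; bt_pos : coord; bt_pow : pow }.

(* labellings: cells -> X u {NaC}, NaC represented by None *)
Definition labelling (X : Type) := cell -> option X.

(* (sigma f)(c) = f(sigma^{-1} c), with sigma = T^m, so sigma^{-1} = T^(4-m) *)
Definition act (X : Type) (s : btwist) (f : labelling X) : labelling X :=
  fun c => f (iter (4 - pow_nat (bt_pow s)) (qt_cell (bt_axis s) (bt_pos s)) c).

Definition legal (X : Type) (f : labelling X) : Prop := forall c, f c <> None.

Inductive color : Type := red | white | green | orange | yellow | blue.

Definition solved (c : cell) : color :=
  match cax c, get (cpt c) (cax c) with
  | AX, PInf => red   | AY, PInf => blue  | AZ, PInf => white
  | AX, _    => orange | AY, _   => green | AZ, _    => yellow
  end.

End Cube.

(* Ordinal lengths are represented by (strictly) well-ordered types. *)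
Record wotype : Type := WO {
  wo_car :> Type;
  wo_lt : wo_car -> wo_car -> Prop;
  wo_trans : forall a b c, wo_lt a b -> wo_lt b c -> wo_lt a c;
  wo_total : forall a b, wo_lt a b \/ a = b \/ wo_lt b a;
  wo_wf : well_founded wo_lt }.

Section Runs.
Variables (L : Type) (W : wotype) (X : Type).
Variable sq : W -> btwist L.  (* a basic sequence of length (order type of) W *)

(* stages eta <= theta : Some w for w in W, None for theta itself *)
Definition stage_lt (s t : option W) : Prop :=
  match s, t with
  | Some a, Some b => wo_lt a b
  | Some _, None => True
  | None, _ => False
  end.

Definition evconst (F : option W -> labelling L X) (s : option W) (c : cell L)
    (x : option X) : Prop :=
  exists w, stage_lt (Some w) s /\
    forall v, stage_lt (Some v) s -> ~ wo_lt v w -> F (Some v) c = x.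

Definition IsRun (f0 : labelling L X) (F : option W -> labelling L X) : Prop :=
  forall s : option W,
    (* s = 0 *)
    ((forall w, ~ stage_lt (Some w) s) -> F s = f0) /\
    (* s = w + 1 *)
    (forall w, stage_lt (Some w) s ->
       (forall v, stage_lt (Some v) s -> ~ wo_lt w v) ->
       F s = act (sq w) (F (Some w))) /\
    (* s a limit *)
    ((exists w, stage_lt (Some w) s) ->
     (forall w, stage_lt (Some w) s -> exists v, stage_lt (Some v) s /\ wo_lt w v) ->
     forall c, (forall x, evconst F s c x -> F s c = x) /\
               ((forall x, ~ evconst F s c x) -> F s c = None)).

Definition reaches (f0 g : labelling L X) : Prop :=
  exists F, IsRun f0 F /\ F None = g.

Definition convergent (f0 : labelling L X) : Prop :=
  exists F, IsRun f0 F /\ legal (F None).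

End Runs.

Definition univ_convergent (L : Type) (W : wotype) (sq : W -> btwist L) : Prop :=
  convergent sq (fun c : cell L => Some c).

Definition solved_lab (L : Type) : labelling L color := fun c => Some (solved c).

Definition kS24 : nat := \big[lcmn/1%N]_(s : 'S_24) #[s]%g.

(* order type of W' <= theta * n (ordinal product: n copies of theta, i.e.
   lexicographic order on {0..n-1} x W with the first coordinate major) *)
Definition len_le_mul (W' W : wotype) (n : nat) : Prop :=
  exists g : W' -> nat * W,
    (forall a, (g a).1 < n) /\
    (forall a b, wo_lt a b ->
       (g a).1 < (g b).1 \/ ((g a).1 = (g b).1 /\ wo_lt (g a).2 (g b).2)).

(* In the run of the identity labelling (each cell labelled by itself) every legal stage is
   rigid: it is an injective relabelling moving the cells at each point by one rotation of the
   cube, and any run is this run composed with its initial labelling.  Rigidity survives a limit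
   stage as long as the solved run is legal there.  Indeed, a cell can only become NaC if twists
   of one of its slices occur cofinally often; but since a rotation is determined by where it
   sends two faces, in a rigid state every such twist changes a solved color of the edge piece
   of that slice, so that the solved run is NaC there too.  NaC never disappears from a finite
   set of cells stable under all twists, so a solved run that is legal at the end is legal
   throughout, and then so is the identity run.

   The identity run thus ends in a permutation [pi] of the cells, and [f = solved o pi].  The
   iterates of a cell under [pi] are images of it by rotations, so every orbit of [pi] has at
   most 24 elements and [pi ^ k] is the identity.  Repeating the sequence [k - 1] times from [f]
   therefore ends in [solved o pi ^ k = solved]. *)

From Pilot Require Import Defs.
From mathcomp Require Import all_boot fingroup perm.
From Stdlib Require Import ProofIrrelevance ClassicalEpsilon FunctionalExtensionality Classical.
From Stdlib Require List.

Set Implicit Arguments.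
Unset Strict Implicit.
Unset Printing Implicit Defensive.

Lemma cell_ext (L : Type) (c d : cell L) : cpt c = cpt d -> cax c = cax d -> c = d.
Proof.
case: c => p i H; case: d => q j H' /= Ep Ei; subst.
by rewrite (proof_irrelevance _ H H').
Qed.

Lemma cnegK (L : Type) : involutive (@cneg L).
Proof. by case. Qed.

Definition axes : list axis := [:: AX; AY; AZ].

Lemma in_axes (j : axis) : List.In j axes.
Proof. by case: j; rewrite /=; tauto. Qed.

Definition axis_eqb (i j : axis) : bool :=
  match i, j with AX, AX | AY, AY | AZ, AZ => true | _, _ => false end.

Lemma axis_eqbP (i j : axis) : reflect (i = j) (axis_eqb i j).
Proof. by case: i; case: j; constructor. Qed.

Lemma forallb_In (A : Type) (p : A -> bool) (l : list A) (x : A) :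
  List.forallb p l -> List.In x l -> p x.
Proof. by move/List.forallb_forall; apply. Qed.

(** * Signed permutations of the axes *)

Definition csign (L : Type) (b : bool) (a : coord L) : coord L := if b then cneg a else a.

Lemma csign_addb (L : Type) (b1 b2 : bool) (a : coord L) :
  csign (b1 (+) b2) a = csign b1 (csign b2 a).
Proof. by case: b1; case: b2; rewrite //= cnegK. Qed.

(* [sp_entry h k = (j, b)]: coordinate [k] of [sp_apply h P] is coordinate [j] of [P],
   negated iff [b]. *)
Record sperm := SPerm { sp_x : axis * bool; sp_y : axis * bool; sp_z : axis * bool }.

Definition sp_entry (h : sperm) (k : axis) : axis * bool :=
  match k with AX => sp_x h | AY => sp_y h | AZ => sp_z h end.

Definition sp_apply (L : Type) (h : sperm) (P : pt L) : pt L :=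
  Pt (csign (sp_x h).2 (get P (sp_x h).1)) (csign (sp_y h).2 (get P (sp_y h).1))
     (csign (sp_z h).2 (get P (sp_z h).1)).

Lemma get_sp_apply (L : Type) (h : sperm) (P : pt L) (k : axis) :
  get (sp_apply h P) k = csign (sp_entry h k).2 (get P (sp_entry h k).1).
Proof. by case: k. Qed.

(* the coordinate to which [h] carries the marked axis [j] *)
Definition sp_axis (h : sperm) (j : axis) : axis :=
  if axis_eqb (sp_x h).1 j then AX else if axis_eqb (sp_y h).1 j then AY else AZ.

Definition sp_comp (g h : sperm) : sperm :=
  let entry '(a, s) := let '(b, t) := sp_entry h a in (b, s (+) t) in
  SPerm (entry (sp_x g)) (entry (sp_y g)) (entry (sp_z g)).

Lemma sp_apply_comp (L : Type) (g h : sperm) (P : pt L) :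
  sp_apply (sp_comp g h) P = sp_apply g (sp_apply h P).
Proof.
case: g => [[a1 s1] [a2 s2] [a3 s3]]; rewrite /sp_apply /sp_comp /= !get_sp_apply.
by case: (sp_entry h a1) => ? ?; case: (sp_entry h a2) => ? ?; case: (sp_entry h a3) => ? ?;
  rewrite /= !csign_addb.
Qed.

Definition sp_id : sperm := SPerm (AX, false) (AY, false) (AZ, false).

Lemma sp_apply_id (L : Type) (P : pt L) : sp_apply sp_id P = P.
Proof. by case: P. Qed.

Lemma sp_axis_id (j : axis) : sp_axis sp_id j = j.
Proof. by case: j. Qed.

Definition sp_quarter (i : axis) : sperm :=
  match i with
  | AX => SPerm (AX, false) (AZ, true) (AY, false)
  | AY => SPerm (AZ, false) (AY, false) (AX, true)
  | AZ => SPerm (AY, true) (AX, false) (AZ, false)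
  end.

Lemma rot_sp_quarter (L : Type) (i : axis) (P : pt L) : Defs.rot i P = sp_apply (sp_quarter i) P.
Proof. by case: i; case: P. Qed.

Lemma swap_sp_quarter (i j : axis) : swap i j = sp_axis (sp_quarter i) j.
Proof. by case: i; case: j. Qed.

Definition signed_axes : list (axis * bool) :=
  [:: (AX, false); (AX, true); (AY, false); (AY, true); (AZ, false); (AZ, true)].

Definition even_axes (a b c : axis) : bool :=
  match a, b, c with AX, AY, AZ | AY, AZ, AX | AZ, AX, AY => true | _, _, _ => false end.

Definition odd_axes (a b c : axis) : bool :=
  match a, b, c with AX, AZ, AY | AY, AX, AZ | AZ, AY, AX => true | _, _, _ => false end.

Definition sp_proper (h : sperm) : bool :=
  let: SPerm (a, s) (b, t) (c, u) := h in
  (even_axes a b c && ~~ (s (+) t (+) u)) || (odd_axes a b c && (s (+) t (+) u)).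

Definition rotations : list sperm :=
  List.filter sp_proper
    (List.flat_map (fun a => List.flat_map (fun b => List.map (SPerm a b) signed_axes)
       signed_axes) signed_axes).

Lemma size_rotations : length rotations = 24.
Proof. by vm_compute. Qed.

Definition signed_axis_eqb (p q : axis * bool) : bool := axis_eqb p.1 q.1 && (p.2 == q.2).

Definition sp_eqb (g h : sperm) : bool :=
  [&& signed_axis_eqb (sp_x g) (sp_x h), signed_axis_eqb (sp_y g) (sp_y h)
    & signed_axis_eqb (sp_z g) (sp_z h)].

Lemma sp_eqbP (g h : sperm) : reflect (g = h) (sp_eqb g h).
Proof.
apply: (iffP idP) => [|<-].
  case: g => [[a1 s1] [a2 s2] [a3 s3]]; case: h => [[b1 t1] [b2 t2] [b3 t3]].
  rewrite /sp_eqb /signed_axis_eqb /=.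
  by case/and3P => /andP[/axis_eqbP-> /eqP->] /andP[/axis_eqbP-> /eqP->]
    /andP[/axis_eqbP-> /eqP->].
by case: g => [[[] []] [[] []] [[] []]].
Qed.

Definition in_rotations (h : sperm) : bool := List.existsb (sp_eqb h) rotations.

Lemma in_rotationsP (h : sperm) : in_rotations h -> List.In h rotations.
Proof.
rewrite /in_rotations; elim: rotations => //= g l IH.
by case/orP => [/sp_eqbP ->|/IH]; [left|right].
Qed.

Lemma sp_quarter_rotation (i : axis) : List.In (sp_quarter i) rotations.
Proof. by apply: in_rotationsP; case: i; vm_compute. Qed.

Lemma sp_id_rotation : List.In sp_id rotations.
Proof. by apply: in_rotationsP; vm_compute. Qed.

Definition comp_check : bool :=
  List.forallb (fun g => List.forallb (fun h =>
    in_rotations (sp_comp g h) &&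
    List.forallb (fun j => axis_eqb (sp_axis (sp_comp g h) j) (sp_axis g (sp_axis h j))) axes)
    rotations) rotations.

Lemma comp_check_ok : comp_check. Proof. by vm_compute. Qed.

Lemma sp_comp_rotation (g h : sperm) :
  List.In g rotations -> List.In h rotations -> List.In (sp_comp g h) rotations.
Proof.
move=> Hg Hh; have /andP[H _] := forallb_In (forallb_In comp_check_ok Hg) Hh.
exact: in_rotationsP.
Qed.

Lemma sp_axis_comp (g h : sperm) (j : axis) :
  List.In g rotations -> List.In h rotations ->
  sp_axis (sp_comp g h) j = sp_axis g (sp_axis h j).
Proof.
move=> Hg Hh; have /andP[_ H] := forallb_In (forallb_In comp_check_ok Hg) Hh.
exact/axis_eqbP/(forallb_In H (in_axes j)).
Qed.

Definition sp_axis_check : bool :=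
  List.forallb (fun h =>
    List.forallb (fun j => axis_eqb (sp_entry h (sp_axis h j)).1 j) axes) rotations.

Lemma sp_axis_check_ok : sp_axis_check. Proof. by vm_compute. Qed.

Lemma sp_entry_axis (h : sperm) (j : axis) :
  List.In h rotations -> (sp_entry h (sp_axis h j)).1 = j.
Proof.
move=> Hh; exact/axis_eqbP/(forallb_In (forallb_In sp_axis_check_ok Hh) (in_axes j)).
Qed.

(* where axis [j] goes under [h], with the sign it acquires *)
Definition sp_facet (h : sperm) (j : axis) : axis * bool :=
  (sp_axis h j, (sp_entry h (sp_axis h j)).2).

Definition facet_check : bool :=
  List.forallb (fun g => List.forallb (fun h =>
    List.forallb (fun j => List.forallb (fun m =>
      [|| axis_eqb j m, sp_eqb g h,
          ~~ signed_axis_eqb (sp_facet g j) (sp_facet h j)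
        | ~~ signed_axis_eqb (sp_facet g m) (sp_facet h m)])
      axes) axes) rotations) rotations.

Lemma facet_check_ok : facet_check. Proof. by vm_compute. Qed.

Lemma rotation_eq_facet2 (g h : sperm) (j m : axis) :
  List.In g rotations -> List.In h rotations -> j <> m ->
  sp_facet g j = sp_facet h j -> sp_facet g m = sp_facet h m -> g = h.
Proof.
move=> Hg Hh Hjm Ej Em.
have := forallb_In (forallb_In (forallb_In (forallb_In facet_check_ok Hg) Hh)
  (in_axes j)) (in_axes m).
have refl p : signed_axis_eqb p p by case: p => [[] []].
rewrite Ej Em !refl; case: (axis_eqbP j m) => // _ /=.
by rewrite !orbF => /sp_eqbP.
Qed.

Section Twists.
Variable L : Type.
Implicit Types (c : cell L) (P : pt L) (a : coord L).

Lemma get_rot_axis i P : get (Defs.rot i P) i = get P i.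
Proof. by case: i; case: P. Qed.

Lemma qt_cell_moved i a c : get (cpt c) i = a ->
  cpt (qt_cell i a c) = Defs.rot i (cpt c) /\ cax (qt_cell i a c) = swap i (cax c).
Proof. by rewrite /qt_cell /= /qt_pt /qt_ax; case: (dec _). Qed.

Lemma qt_cell_fixed i a c : get (cpt c) i <> a -> qt_cell i a c = c.
Proof. by move=> H; apply: cell_ext; rewrite /qt_cell /= /qt_pt /qt_ax; case: (dec _). Qed.

Lemma iter_qt_cell_fixed i a c m : get (cpt c) i <> a -> iter m (qt_cell i a) c = c.
Proof. by move=> H; elim: m => //= m ->; apply: qt_cell_fixed. Qed.

Lemma iter_qt_cell_moved i a c m : get (cpt c) i = a ->
  cpt (iter m (qt_cell i a) c) = iter m (Defs.rot i) (cpt c) /\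
  cax (iter m (qt_cell i a) c) = iter m (swap i) (cax c).
Proof.
move=> Hc; elim: m => [//|m [Ep Ei]]; rewrite !iterS.
have Hm : get (cpt (iter m (qt_cell i a) c)) i = a.
  by rewrite Ep; elim: m {Ep Ei} => //= m IH; rewrite get_rot_axis.
by case: (qt_cell_moved Hm) => -> ->; rewrite Ep Ei.
Qed.

Fixpoint sp_pow (h : sperm) (m : nat) : sperm :=
  if m is m'.+1 then sp_comp h (sp_pow h m') else sp_id.

Lemma sp_pow_rotation h m : List.In h rotations -> List.In (sp_pow h m) rotations.
Proof. by move=> H; elim: m => /= [|m IH]; [apply: sp_id_rotation | apply: sp_comp_rotation]. Qed.

Lemma iter_rot i m P : iter m (Defs.rot i) P = sp_apply (sp_pow (sp_quarter i) m) P.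
Proof. by elim: m => /= [|m ->]; rewrite ?sp_apply_id // sp_apply_comp rot_sp_quarter. Qed.

Lemma iter_swap i m j : iter m (swap i) j = sp_axis (sp_pow (sp_quarter i) m) j.
Proof.
elim: m => /= [|m ->]; first by rewrite sp_axis_id.
rewrite sp_axis_comp ?swap_sp_quarter //; first exact: sp_quarter_rotation.
exact/sp_pow_rotation/sp_quarter_rotation.
Qed.

Lemma iter_qt_cell_rigid i a m P : exists2 h, List.In h rotations & forall c, cpt c = P ->
  cpt (iter m (qt_cell i a) c) = sp_apply h P /\ cax (iter m (qt_cell i a) c) = sp_axis h (cax c).
Proof.
case: (dec (get P i = a)) => HP.
  exists (sp_pow (sp_quarter i) m); first by apply/sp_pow_rotation/sp_quarter_rotation.
  by move=> c EP; subst P; case: (iter_qt_cell_moved m HP) => -> ->; rewrite iter_rot iter_swap.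
exists sp_id => [|c EP]; first exact: sp_id_rotation.
by subst P; rewrite iter_qt_cell_fixed // sp_apply_id sp_axis_id.
Qed.

Lemma iter4_qt_cell i a c : iter 4 (qt_cell i a) c = c.
Proof.
case: (dec (get (cpt c) i = a)) => Hc; last exact: iter_qt_cell_fixed.
have [Ep Ei] := iter_qt_cell_moved 4 Hc; apply: cell_ext; rewrite ?Ep ?Ei.
  by case: i {Ep Ei Hc}; case: (cpt c) => x y z /=; rewrite !cnegK.
by case: i {Ep Ei Hc}; case: (cax c).
Qed.

Lemma iter_qt_cellK i a m c : m <= 4 ->
  iter (4 - m) (qt_cell i a) (iter m (qt_cell i a) c) = c.
Proof. by move=> Hm; rewrite -iterD subnK // iter4_qt_cell. Qed.

Lemma iter_qt_cell_inj i a m : m <= 4 -> injective (iter m (qt_cell i a)).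
Proof. by move=> Hm c d E; rewrite -(iter_qt_cellK i a c Hm) -(iter_qt_cellK i a d Hm) E. Qed.

Lemma pow_nat_le4 (p : pow) : pow_nat p <= 4.
Proof. by case: p. Qed.

End Twists.

(** * Transfinite runs *)

Section Stages.
Variable W : wotype.
Implicit Types (a b v w : W) (s t : option W).

Lemma wo_lt_irr a : ~ wo_lt a a.
Proof. by elim/(well_founded_ind (@wo_wf W)): a => a IH H; apply: (IH a H H). Qed.

Lemma wo_min (P : W -> Prop) :
  (exists x, P x) -> exists x, P x /\ forall y, wo_lt y x -> ~ P y.
Proof.
case=> x; elim/(well_founded_ind (@wo_wf W)): x => x IH Px.
case: (classic (exists2 y, wo_lt y x & P y)) => [[y Hyx Py]|H]; first exact: IH Hyx Py.
by exists x; split=> // y Hyx Py; apply: H; exists y.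
Qed.

Lemma stage_lt_wf : well_founded (@stage_lt W).
Proof.
have Acc_some a : Acc (@stage_lt W) (Some a).
  elim/(well_founded_ind (@wo_wf W)): a => a IH.
  by constructor=> -[b|] /= Hb; [apply: IH | case: Hb].
case=> [a|]; first exact: Acc_some.
by constructor=> -[b|] /= Hb; [apply: Acc_some | case: Hb].
Qed.

Definition below w s : Prop := stage_lt (Some w) s.
Definition is_zero s : Prop := forall w, ~ below w s.
Definition is_pred s w : Prop := below w s /\ forall v, below v s -> ~ wo_lt w v.
Definition is_limit s : Prop :=
  (exists w, below w s) /\ forall w, below w s -> exists v, below v s /\ wo_lt w v.

(* [~ wo_lt v b] reads [b <= v] *)
Definition eventually s (P : W -> Prop) : Prop :=
  exists b, below b s /\ forall v, below v s -> ~ wo_lt v b -> P v.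

Lemma below_trans v w s : wo_lt v w -> below w s -> below v s.
Proof. by case: s => //= t; apply: wo_trans. Qed.

Lemma below_leq v w s : ~ wo_lt v w -> below v s -> below w s.
Proof. by move=> Hvw Hv; case: (wo_total v w) => [//|[<- //|/below_trans]]; apply. Qed.

Lemma stage_cases s : is_zero s \/ (exists w, is_pred s w) \/ is_limit s.
Proof.
case: (classic (exists w, below w s)) => [Hne|Hz]; last by left=> w Hw; apply: Hz; exists w.
case: (classic (exists w, is_pred s w)) => [Hp|Hp]; first by right; left.
right; right; split=> // w Hw; apply: NNPP => Hmax; apply: Hp.
by exists w; split=> // v Hv Hwv; apply: Hmax; exists v.
Qed.

Lemma is_pred_uniq s w1 w2 : is_pred s w1 -> is_pred s w2 -> w1 = w2.
Proof.
move=> [H1 M1] [H2 M2]; case: (wo_total w1 w2) => [H|[//|H]];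
  by [case: (M1 _ H2 H) | case: (M2 _ H1 H)].
Qed.

Lemma limit_no_pred s w : is_limit s -> ~ is_pred s w.
Proof. by move=> [_ Hl] [Hw M]; have [v [Hv Hwv]] := Hl w Hw; apply: M Hv Hwv. Qed.

Lemma wo_succ w v : wo_lt w v -> exists u, ~ wo_lt v u /\ is_pred (Some u) w.
Proof.
move=> Hwv; have [u [Hwu M]] := wo_min (ex_intro (wo_lt w) v Hwv).
by exists u; split=> [Hvu|]; [apply: M Hvu Hwv | split=> // v' /M].
Qed.

Lemma eventually_ge s w : below w s -> eventually s (fun v => ~ wo_lt v w).
Proof. by exists w. Qed.

Lemma eventually_and s (P Q : W -> Prop) :
  eventually s P -> eventually s Q -> eventually s (fun v => P v /\ Q v).
Proof.
move=> [b1 [H1 E1]] [b2 [H2 E2]].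
case: (wo_total b1 b2) => [Hlt|[Eb|Hlt]]; try subst b2.
- exists b2; split=> // v Hv Hvb; split; last exact: E2.
  by apply: E1 => // Hvb1; apply: Hvb; apply: wo_trans Hvb1 Hlt.
- by exists b1; split=> // v Hv Hvb; split; [apply: E1 | apply: E2].
- exists b1; split=> // v Hv Hvb; split; first exact: E1.
  by apply: E2 => // Hvb2; apply: Hvb; apply: wo_trans Hvb2 Hlt.
Qed.

Lemma eventually_ex s (P : W -> Prop) : eventually s P -> exists2 v, below v s & P v.
Proof. by move=> [b [Hb E]]; exists b => //; apply: E Hb (@wo_lt_irr b). Qed.

Lemma eventually_list (T : Type) s (l : list T) (Q : W -> T -> Prop) :
  (exists w, below w s) -> (forall d, List.In d l -> eventually s (Q^~ d)) ->
  eventually s (fun v => forall d, List.In d l -> Q v d).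
Proof.
move=> [w0 H0]; elim: l => [|d l IH] Hl; first by exists w0.
have [b [Hb E]] := eventually_and (Hl d (or_introl erefl))
  (IH (fun d' Hd' => Hl d' (or_intror Hd'))).
by exists b; split=> // v Hv Hvb d' [<-|Hd']; have [? ?] := E v Hv Hvb; auto.
Qed.

Lemma evconst_uniq (L X : Type) (F : option W -> labelling L X) s c x y :
  evconst F s c x -> evconst F s c y -> x = y.
Proof. by move=> Ex Ey; have [v _ [<- <-]] := eventually_ex (eventually_and Ex Ey). Qed.

Lemma evconst_ext (L X : Type) (F G : option W -> labelling L X) s c x :
  (forall v, below v s -> F (Some v) = G (Some v)) -> evconst F s c x -> evconst G s c x.
Proof. by move=> E [b [Hb H]]; exists b; split=> // v Hv Hvb; rewrite -E ?H. Qed.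

End Stages.

Section Runs.
Variables (L : Type) (W : wotype) (X : Type) (sq : W -> btwist L).
Implicit Types (w : W) (s : option W) (F : option W -> labelling L X).

Lemma run_zero (f0 : labelling L X) F s : IsRun sq f0 F -> is_zero s -> F s = f0.
Proof. by move=> R; apply: (proj1 (R s)). Qed.

Lemma run_succ (f0 : labelling L X) F s w :
  IsRun sq f0 F -> is_pred s w -> F s = act (sq w) (F (Some w)).
Proof. by move=> R [Hw M]; apply: (proj1 (proj2 (R s)) w Hw M). Qed.

Lemma run_lim (f0 : labelling L X) F s c x :
  IsRun sq f0 F -> is_limit s -> evconst F s c x -> F s c = x.
Proof. by move=> R [Hne Hl]; apply: (proj1 (proj2 (proj2 (R s)) Hne Hl c)). Qed.

Lemma run_lim_none (f0 : labelling L X) F s c :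
  IsRun sq f0 F -> is_limit s -> (forall x, ~ evconst F s c x) -> F s c = None.
Proof. by move=> R [Hne Hl]; apply: (proj2 (proj2 (proj2 (R s)) Hne Hl c)). Qed.

Lemma run_lim_evconst (f0 : labelling L X) F s c :
  IsRun sq f0 F -> is_limit s -> F s c <> None -> evconst F s c (F s c).
Proof.
move=> R Hs Hc; case: (classic (exists x, evconst F s c x)) => [[x Ex]|Hno].
  by rewrite (run_lim R Hs Ex).
by case: Hc; apply: (run_lim_none R Hs) => x Ex; apply: Hno; exists x.
Qed.

Lemma IsRun_intro (f0 : labelling L X) F :
  (forall s, is_zero s -> F s = f0) ->
  (forall s w, is_pred s w -> F s = act (sq w) (F (Some w))) ->
  (forall s, is_limit s -> forall c,
     (forall x, evconst F s c x -> F s c = x) /\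
     ((forall x, ~ evconst F s c x) -> F s c = None)) ->
  IsRun sq f0 F.
Proof.
move=> Hz Hp Hl s; split; first exact: Hz.
by split=> [w Hw M|Hne Hlim]; [apply: Hp | apply: Hl].
Qed.

Variable f0 : labelling L X.

Definition run_step s (r : option W -> labelling L X) : labelling L X :=
  match dec (exists w, is_pred s w) with
  | left H =>
    let w := proj1_sig (constructive_indefinite_description _ H) in act (sq w) (r (Some w))
  | right _ =>
    if dec (exists w, below w s) then
      fun c => match dec (exists x, evconst r s c x) with
               | left H => proj1_sig (constructive_indefinite_description _ H)
               | right _ => None
               end
    else f0
  end.

Definition the_run : option W -> labelling L X :=
  Fix (@stage_lt_wf W) (fun _ => labelling L X)
    (fun s rec => run_step s (fun t => if dec (stage_lt t s) is left H then rec t H else f0)).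

Lemma the_runE s :
  the_run s = run_step s (fun t => if dec (stage_lt t s) is left _ then the_run t else f0).
Proof.
rewrite {1}/the_run Fix_eq // => t g h E; congr run_step.
by apply: functional_extensionality => t'; case: (dec _).
Qed.

Lemma the_run_IsRun : IsRun sq f0 the_run.
Proof.
apply: IsRun_intro => s; rewrite the_runE;
  set r := fun t => if dec (stage_lt t s) is left _ then the_run t else f0; rewrite /run_step;
  have Er v : below v s -> r (Some v) = the_run (Some v) by rewrite /r; case: (dec _).
- move=> Hz; destruct (dec (exists w, is_pred s w)) as [H|Hnp].
    by exfalso; case: H => w [Hw _]; case: (Hz w).
  by destruct (dec (exists w, below w s)) as [[w Hw]|Hne]; first case: (Hz w).
- move=> w Hw; destruct (dec (exists w, is_pred s w)) as [H|[]]; last by exists w.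
  case: (constructive_indefinite_description _ H) => w' Hw' /=.
  by rewrite (is_pred_uniq Hw' Hw) Er //; case: Hw.
- move=> Hl c /=; destruct (dec (exists w, is_pred s w)) as [H|Hnp].
    by exfalso; case: H => w /(limit_no_pred Hl).
  destruct (dec (exists w, below w s)) as [Hne|[]] => /=; last exact: (proj1 Hl).
  have Eev x : evconst r s c x <-> evconst the_run s c x.
    by split; apply: evconst_ext => v Hv; rewrite Er.
  destruct (dec (exists x, evconst r s c x)) as [H|H].
    case: (constructive_indefinite_description _ H) => x Hx /=; split.
      by move=> y /Eev; apply: evconst_uniq.
    by move=> Hno; case: (Hno x); apply/Eev.
  by split=> // x /Eev Hx; case: H; exists x.
Qed.

End Runs.

Section Twisting.
Variable L : Type.

Definition twist_moves (t : btwist L) (c : cell L) : Prop := get (cpt c) (bt_axis t) = bt_pos t.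

Lemma act_fixed (X : Type) (t : btwist L) (f : labelling L X) c :
  ~ twist_moves t c -> act t f c = f c.
Proof. by move=> Hc; rewrite /act iter_qt_cell_fixed. Qed.

Lemma act_iter (X : Type) (t : btwist L) (f : labelling L X) c :
  act t f (iter (pow_nat (bt_pow t)) (qt_cell (bt_axis t) (bt_pos t)) c) = f c.
Proof. by rewrite /act iter_qt_cellK ?pow_nat_le4. Qed.

Variables (W : wotype) (sq : W -> btwist L).

Lemma run_stable_unmoved (X : Type) (f0 : labelling L X) F s b c :
  IsRun sq f0 F -> below b s ->
  (forall w, below w s -> ~ wo_lt w b -> ~ twist_moves (sq w) c) ->
  forall v, below v s -> ~ wo_lt v b -> F (Some v) c = F (Some b) c.
Proof.
move=> R Hb Hfix; elim/(well_founded_ind (@wo_wf W)) => v IH Hv Hvb.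
case: (wo_total v b) => [//|[-> //|Hbv]].
case: (stage_cases (Some v)) => [Hz|[[u Hu]|Hl]]; first by case: (Hz b).
- have Hus : below u s := below_trans (proj1 Hu) Hv.
  have Hub : ~ wo_lt u b := proj2 Hu b Hbv.
  by rewrite (run_succ R Hu) act_fixed; [apply: IH | apply: Hfix]; try case: Hu.
- apply: (run_lim R Hl); exists b; split=> // v' Hv' Hv'b.
  exact: IH Hv' (below_trans Hv' Hv) Hv'b.
Qed.

Lemma run_relabel (X : Type) (f0 : labelling L X) F G s c d :
  IsRun sq f0 F -> IsRun sq (fun c => Some c) G -> G s c = Some d -> F s c = f0 d.
Proof.
move=> RF RG; elim/(well_founded_ind (@stage_lt_wf W)): s c d => s IH c d.
case: (stage_cases s) => [Hz|[[u Hu]|Hl]].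
- by rewrite (run_zero RG Hz) (run_zero RF Hz) => -[->].
- by rewrite (run_succ RG Hu) (run_succ RF Hu) /act; apply: IH; case: Hu.
- move=> E; have /(run_lim_evconst RG Hl) [b [Hb Hc]] : G s c <> None by rewrite E.
  apply: (run_lim RF Hl); exists b; split=> // v Hv Hvb.
  by apply: IH => //; rewrite Hc // E.
Qed.

(* A finite set of cells, stable under every twist, in which NaC cells are counted. *)
Definition shell_coords (P : pt L) : list (coord L) :=
  [:: px P; py P; pz P; cneg (px P); cneg (py P); cneg (pz P); @PInf L; @NInf L].

Definition in_shell (P Q : pt L) : Prop := forall k, List.In (get Q k) (shell_coords P).

Lemma shell_coords_csign P b a : List.In a (shell_coords P) -> List.In (csign b a) (shell_coords P).
Proof. by case: b => //=; intuition subst; rewrite ?cnegK /=; tauto. Qed.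

Lemma in_shell_qt_pt P i a Q : in_shell P Q -> in_shell P (qt_pt i a Q).
Proof.
rewrite /qt_pt; case: (dec (get Q i = a)) => // Ha HQ k.
by rewrite rot_sp_quarter get_sp_apply; apply/shell_coords_csign/HQ.
Qed.

Definition cells_at (Q : pt L) : list (cell L) :=
  List.flat_map (fun i => if dec (is_inf (get Q i)) is left H then [:: Cell H] else [::]) axes.

Lemma cells_atP Q d : List.In d (cells_at Q) <-> cpt d = Q.
Proof.
split=> [/List.in_flat_map [i [_]] | <-]; first by case: (dec _) => // H [<- | //].
apply/List.in_flat_map; exists (cax d); split; first exact: in_axes.
by case: (dec _) => [H|[]]; [left; apply: cell_ext | apply: cinf].
Qed.

Definition shell_cells (P : pt L) : list (cell L) :=
  let S := shell_coords P in
  List.nodup (fun c d => dec (c = d)) (List.flat_map cells_at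
    (List.flat_map (fun x => List.flat_map (fun y => List.map (Pt x y) S) S) S)).

Lemma in_shell_cells P d : List.In d (shell_cells P) <-> in_shell P (cpt d).
Proof.
rewrite List.nodup_In List.in_flat_map; split.
  move=> [Q [/List.in_flat_map [x [Hx /List.in_flat_map [y [Hy /List.in_map_iff [z [<- Hz]]]]]]
    /cells_atP ->]].
  by case.
case: d => -[x y z] i H HQ; exists (Pt x y z); split; last by apply/cells_atP.
move: (HQ AX) (HQ AY) (HQ AZ) => Hx Hy Hz.
apply/List.in_flat_map; exists x; split; first exact: Hx.
apply/List.in_flat_map; exists y; split; first exact: Hy.
by apply/List.in_map_iff; exists z.
Qed.

Lemma in_shell_iter_qt_cell P i a m d :
  in_shell P (cpt d) -> in_shell P (cpt (iter m (qt_cell i a) d)).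
Proof. by move=> H; elim: m => //= m; apply: in_shell_qt_pt. Qed.

Definition shell_nac (X : Type) (f : labelling L X) (P : pt L) : list (cell L) :=
  List.filter (fun d => ~~ isSome (f d)) (shell_cells P).

Lemma in_shell_nac (X : Type) (f : labelling L X) P d :
  List.In d (shell_nac f P) <-> in_shell P (cpt d) /\ f d = None.
Proof. by rewrite List.filter_In in_shell_cells; case: (f d) => [x|]; split=> -[]. Qed.

Lemma shell_nac_NoDup (X : Type) (f : labelling L X) P : List.NoDup (shell_nac f P).
Proof. exact/List.NoDup_filter/List.NoDup_nodup. Qed.

Lemma shell_nac_act (X : Type) (t : btwist L) (f : labelling L X) P :
  length (shell_nac f P) <= length (shell_nac (act t f) P).
Proof.
set T := iter (pow_nat (bt_pow t)) (qt_cell (bt_axis t) (bt_pos t)).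
rewrite -(List.length_map T); apply/leP/List.NoDup_incl_length.
  apply: List.NoDup_map_NoDup_ForallPairs (shell_nac_NoDup f P) => x y _ _.
  exact/iter_qt_cell_inj/pow_nat_le4.
move=> _ /List.in_map_iff [d [<- /in_shell_nac [Hd Hfd]]].
by apply/in_shell_nac; rewrite act_iter; split=> //; apply: in_shell_iter_qt_cell.
Qed.

Lemma shell_nac_sub (X : Type) (f g : labelling L X) P :
  (forall d, in_shell P (cpt d) -> f d = None -> g d = None) ->
  length (shell_nac f P) <= length (shell_nac g P).
Proof.
move=> Hfg; apply/leP/List.NoDup_incl_length; first exact: shell_nac_NoDup.
by move=> d /in_shell_nac [Hd Hfd]; apply/in_shell_nac; split=> //; apply: Hfg.
Qed.

Lemma shell_nac_mono (X : Type) (f0 : labelling L X) F P t w0 :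
  IsRun sq f0 F -> below w0 t -> length (shell_nac (F (Some w0)) P) <= length (shell_nac (F t) P).
Proof.
move=> R; elim/(well_founded_ind (@stage_lt_wf W)): t w0 => t IH w0 Hw0.
suff [e [He Hew0 Hle]] : exists e, [/\ below e t, ~ wo_lt e w0 &
    length (shell_nac (F (Some e)) P) <= length (shell_nac (F t) P)].
  apply: leq_trans Hle; case: (wo_total w0 e) => [Hlt|[-> //|/Hew0 //]].
  exact: IH He w0 Hlt.
case: (stage_cases t) => [Hz|[[u Hu]|Hl]]; first by case: (Hz w0).
- exists u; split; [by case: Hu | by apply: (proj2 Hu) | by rewrite (run_succ R Hu) shell_nac_act].
- have Hstable : eventually t (fun v => forall d, List.In d (shell_cells P) ->
      F t d <> None -> F (Some v) d = F t d).
    apply: eventually_list (proj1 Hl) _ => d _.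
    case: (classic (F t d = None)) => [Hd|/(run_lim_evconst R Hl) [b [Hb Hc]]].
      by have [w Hw] := proj1 Hl; exists w; split.
    by exists b; split=> // v Hv Hvb _; apply: Hc.
  have [e He [Hstab Hew0]] := eventually_ex (eventually_and Hstable (eventually_ge Hw0)).
  exists e; split=> //; apply: shell_nac_sub => d Hd Hed.
  by apply: NNPP => Htd; move: Hed; rewrite Hstab // in_shell_cells.
Qed.

Lemma run_nac_persists (X : Type) (f0 : labelling L X) F s c :
  IsRun sq f0 F -> F s c = None -> exists d, F None d = None.
Proof.
case: s => [w0|] R Hc; last by exists c.
have : List.In c (shell_nac (F (Some w0)) (cpt c)).
  by apply/in_shell_nac; split=> // k; case: k; rewrite /=; tauto.
have := shell_nac_mono (cpt c) R (t := None) (w0 := w0) I.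
case: (shell_nac (F None) (cpt c)) (@in_shell_nac X (F None) (cpt c)) => [|d l] Hin.
  by case: (shell_nac _ _).
by move=> _ _; exists d; apply: (proj2 (proj1 (Hin d) (or_introl erefl))).
Qed.

End Twisting.

(** * The identity run is rigid *)

Section Rigidity.
Variable L : Type.
Implicit Types (g : labelling L (cell L)) (t : btwist L).

Definition rigid g : Prop :=
  forall P : pt L, exists2 h, List.In h rotations & forall c, cpt c = P ->
    exists2 d, g c = Some d & cpt d = sp_apply h P /\ cax d = sp_axis h (cax c).

Definition lab_injective g : Prop := forall c1 c2 d, g c1 = Some d -> g c2 = Some d -> c1 = c2.

Definition recolor g : labelling L color := fun c => omap (@solved L) (g c).

Lemma rigid_total g c : rigid g -> exists d, g c = Some d.
Proof. by move=> Hg; have [h _ /(_ c erefl) [d Hd _]] := Hg (cpt c); exists d. Qed.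

Lemma rigid_id : rigid (fun c => Some c).
Proof.
move=> P; exists sp_id => [|c Hc]; first exact: sp_id_rotation.
by exists c; rewrite // sp_apply_id sp_axis_id.
Qed.

Lemma lab_injective_id : lab_injective (fun c => Some c).
Proof. by move=> c1 c2 d [->] []. Qed.

Lemma rigid_act t g : rigid g -> rigid (act t g).
Proof.
case: t => i a p Hg P /=; rewrite /act /=.
have [h1 Hh1 E1] := iter_qt_cell_rigid i a (4 - pow_nat p) P.
have [h2 Hh2 E2] := Hg (sp_apply h1 P).
exists (sp_comp h2 h1) => [|c Hc]; first exact: sp_comp_rotation.
have [C1 A1] := E1 c Hc; have [d Gd [C2 A2]] := E2 _ C1.
by exists d => //; rewrite sp_apply_comp sp_axis_comp // -A1 -C2.
Qed.

Lemma lab_injective_act t g : lab_injective g -> lab_injective (act t g).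
Proof.
move=> Hg c1 c2 d H1 H2.
by apply: (@iter_qt_cell_inj L (bt_axis t) (bt_pos t) (4 - pow_nat (bt_pow t)) (leq_subr _ _));
  apply: Hg H1 H2.
Qed.

Definition solved_coord (j : axis) (x : coord L) : color :=
  match j, x with
  | AX, PInf => red   | AY, PInf => blue  | AZ, PInf => white
  | AX, _    => orange | AY, _   => green | AZ, _    => yellow
  end.

Lemma solved_coordE (d : cell L) : solved d = solved_coord (cax d) (get (cpt d) (cax d)).
Proof. by []. Qed.

Lemma solved_coord_inj j1 j2 x1 x2 :
  solved_coord j1 x1 = solved_coord j2 x2 -> j1 = j2 /\ (x1 = PInf L <-> x2 = PInf L).
Proof. by case: j1; case: j2; case: x1 => [?|?|||]; case: x2 => [?|?|||]. Qed.

(* The solved color of the image of a [+oo]-face reveals the facet of the rotation. *)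
Lemma solved_facet (h1 h2 : sperm) (Q : pt L) j (d1 d2 : cell L) :
  List.In h1 rotations -> List.In h2 rotations -> get Q j = PInf L ->
  cpt d1 = sp_apply h1 Q -> cax d1 = sp_axis h1 j ->
  cpt d2 = sp_apply h2 Q -> cax d2 = sp_axis h2 j ->
  solved d1 = solved d2 -> sp_facet h1 j = sp_facet h2 j.
Proof.
move=> H1 H2 HQ C1 A1 C2 A2; rewrite !solved_coordE C1 A1 C2 A2 !get_sp_apply.
rewrite !sp_entry_axis // HQ => /solved_coord_inj [Ej E]; rewrite /sp_facet -Ej.
congr pair; move: E; rewrite -Ej.
by case: (sp_entry h1 _).2; case: (sp_entry h2 _).2 => //= -[E1 E2];
  [have := E2 erefl | have := E1 erefl].
Qed.

Definition next_axis (i : axis) : axis := match i with AX => AY | AY => AZ | AZ => AX end.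

Lemma next_axis_neq i : next_axis i <> next_axis (next_axis i).
Proof. by case: i. Qed.

(* the edge piece of the slice [i = a] sitting at [+oo] in the other two coordinates *)
Definition edge_pt (i : axis) (a : coord L) : pt L :=
  match i with
  | AX => Pt a (PInf L) (PInf L)
  | AY => Pt (PInf L) a (PInf L)
  | AZ => Pt (PInf L) (PInf L) a
  end.

Lemma get_edge_pt i a : get (edge_pt i a) i = a.
Proof. by case: i. Qed.

Lemma get_edge_pt1 i a : get (edge_pt i a) (next_axis i) = PInf L.
Proof. by case: i. Qed.

Lemma get_edge_pt2 i a : get (edge_pt i a) (next_axis (next_axis i)) = PInf L.
Proof. by case: i. Qed.

Definition edge_cell1 i a : cell L :=
  Cell (or_introl (get_edge_pt1 i a) : is_inf (get (edge_pt i a) (next_axis i))).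

Definition edge_cell2 i a : cell L :=
  Cell (or_introl (get_edge_pt2 i a) : is_inf (get (edge_pt i a) (next_axis (next_axis i)))).

Definition edge_cells i a : list (cell L) :=
  List.flat_map (fun k => [:: iter k (qt_cell i a) (edge_cell1 i a);
                            iter k (qt_cell i a) (edge_cell2 i a)]) [:: 0; 1; 2; 3].

Lemma iter_in_edge_cells i a (p : pow) :
  List.In (iter (pow_nat p) (qt_cell i a) (edge_cell1 i a)) (edge_cells i a) /\
  List.In (iter (pow_nat p) (qt_cell i a) (edge_cell2 i a)) (edge_cells i a).
Proof. by case: p; rewrite /edge_cells /=; split; tauto. Qed.

Lemma iter_rot_edge_pt i a (p : pow) : iter (pow_nat p) (Defs.rot i) (edge_pt i a) <> edge_pt i a.
Proof. by case: i; case: p. Qed.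

Definition edge_cells_around (P : pt L) : list (cell L) :=
  List.flat_map (fun i => edge_cells i (get P i)) axes.

Lemma edge_cells_around_twist t c e : twist_moves t c ->
  List.In e (edge_cells (bt_axis t) (bt_pos t)) -> List.In e (edge_cells_around (cpt c)).
Proof.
move=> Hc He; apply/List.in_flat_map; exists (bt_axis t).
by rewrite Hc; split=> //; apply: in_axes.
Qed.

(* Two faces determine a rotation, so a twist cannot fix both colors of the edge piece. *)
Lemma twist_recolors_edge t g : rigid g -> lab_injective g ->
  ~ (forall e, List.In e (edge_cells (bt_axis t) (bt_pos t)) -> act t (recolor g) e = recolor g e).
Proof.
case: t => i a p Hg Hinj Hfix.
set T := iter (pow_nat p) (qt_cell i a).
have [In1 In2] := iter_in_edge_cells i a p.
have same_color e : List.In (T e) (edge_cells i a) -> recolor g e = recolor g (T e).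
  by move=> /Hfix; rewrite (act_iter (BT i a p)).
set P := edge_pt i a.
have [h1 Hh1 E1] := Hg P.
have [hk Hhk Ek] := iter_qt_cell_rigid i a (pow_nat p) P.
have [h2 Hh2 E2] := Hg (sp_apply hk P).
have Hh := sp_comp_rotation Hh2 Hhk.
have facet_eq (e : cell L) j : cpt e = P -> cax e = j -> get P j = PInf L ->
    List.In (T e) (edge_cells i a) -> sp_facet h1 j = sp_facet (sp_comp h2 hk) j.
  move=> Ce Ae HPj /same_color; have [C A] := Ek e Ce.
  have [d1 G1 [C1 A1]] := E1 e Ce; have [d2 G2 [C2 A2]] := E2 (T e) C.
  rewrite /recolor G1 G2 => -[]; apply: solved_facet HPj _ _ _ _ => //.
  - by rewrite -Ae.
  - by rewrite C2 sp_apply_comp.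
  - by rewrite A2 A sp_axis_comp // Ae.
have Eh : h1 = sp_comp h2 hk.
  apply: (rotation_eq_facet2 Hh1 Hh (@next_axis_neq i)).
    exact: (facet_eq (edge_cell1 i a) _ erefl erefl (get_edge_pt1 i a) In1).
  exact: (facet_eq (edge_cell2 i a) _ erefl erefl (get_edge_pt2 i a) In2).
have [C A] := Ek (edge_cell1 i a) erefl.
have [d1 G1 [C1 A1]] := E1 (edge_cell1 i a) erefl.
have [d2 G2 [C2 A2]] := E2 (T (edge_cell1 i a)) C.
have Ed : d1 = d2.
  apply: cell_ext; first by rewrite C1 C2 Eh sp_apply_comp.
  by rewrite A1 A2 A Eh sp_axis_comp.
rewrite -Ed in G2; have /(f_equal (@cpt L)) := Hinj _ _ _ G1 G2.
have Hmoved : get (cpt (edge_cell1 i a)) i = a := get_edge_pt i a.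
have [-> _] := iter_qt_cell_moved (pow_nat p) Hmoved.
exact/nesym/iter_rot_edge_pt.
Qed.

End Rigidity.

Section IdentityRun.
Variables (L : Type) (W : wotype) (sq : W -> btwist L).
Variables (F : option W -> labelling L color) (G : option W -> labelling L (cell L)).
Hypotheses (RF : IsRun sq (@solved_lab L) F) (RG : IsRun sq (fun c => Some c) G).
Hypothesis F_legal : forall s, legal (F s).

Let rigid_inj (s : option W) : Prop := rigid (G s) /\ lab_injective (G s).

Lemma run_recolor s : rigid (G s) -> F s = recolor (G s).
Proof.
move=> Hg; apply: functional_extensionality => c.
by have [d Hd] := rigid_total c Hg; rewrite /recolor Hd; apply: run_relabel RF RG Hd.
Qed.

Lemma total_limit s : is_limit s -> (forall v, below v s -> rigid_inj (Some v)) ->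
  forall c, G s c <> None.
Proof.
move=> Hl IH c Hc.
have [b [Hb Hstable]] : eventually s (fun v =>
    forall e, List.In e (edge_cells_around (cpt c)) -> F (Some v) e = F s e).
  apply: eventually_list (proj1 Hl) _ => e _; exact (run_lim_evconst RF Hl (@F_legal s e)).
(* A twist of a slice of [c] after [b] would recolor an edge piece whose colors are settled. *)
have Hfixed w : below w s -> ~ wo_lt w b -> ~ twist_moves (sq w) c.
  move=> Hw Hwb Hmoves; have [Hgw Hinj] := IH w Hw.
  have [v [Hv Hwv]] := proj2 Hl w Hw; have [u [Hvu Hu]] := wo_succ Hwv.
  have Hus : below u s := below_leq Hvu Hv.
  have Hub : ~ wo_lt u b by move=> Hlt; apply: Hwb; apply: wo_trans Hlt; case: Hu.
  apply: (twist_recolors_edge Hgw Hinj) => e /(edge_cells_around_twist Hmoves) He.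
  by rewrite -(run_recolor Hgw) -(run_succ RF Hu) Hstable // Hstable.
have [h _ /(_ c erefl) [d Hd _]] := proj1 (IH b Hb) (cpt c).
have Hlim : G s c = Some d.
  apply: (run_lim RG Hl); exists b; split=> // v Hv Hvb.
  by rewrite (run_stable_unmoved RG Hb Hfixed).
by rewrite Hlim in Hc.
Qed.

Lemma rigid_limit s : is_limit s -> (forall v, below v s -> rigid_inj (Some v)) ->
  (forall c, G s c <> None) -> rigid_inj s.
Proof.
move=> Hl IH Htot; split=> [P|c1 c2 d].
  have [b Hb Hstable] := eventually_ex (eventually_list (l := cells_at P)
    (Q := fun v c => G (Some v) c = G s c) (proj1 Hl)
    (fun c _ => run_lim_evconst RG Hl (Htot c))).
  have [h Hh E] := proj1 (IH b Hb) P; exists h => // c Hc.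
  by rewrite -Hstable; [apply: E | apply/cells_atP].
move: (run_lim_evconst RG Hl (Htot c1)) (run_lim_evconst RG Hl (Htot c2)) => E1 E2 H1 H2.
have [b Hb [Hb1 Hb2]] := eventually_ex (eventually_and E1 E2).
by apply: (proj2 (IH b Hb) c1 c2 d); rewrite ?Hb1 ?Hb2.
Qed.

Lemma identity_run_rigid s : rigid_inj s.
Proof.
elim/(well_founded_ind (@stage_lt_wf W)): s => s IH.
case: (stage_cases s) => [Hz|[[u Hu]|Hl]].
- by rewrite /rigid_inj (run_zero RG Hz); split; [apply: rigid_id | apply: lab_injective_id].
- rewrite /rigid_inj (run_succ RG Hu); have [Hg Hinj] := IH _ (proj1 Hu).
  by split; [apply: rigid_act | apply: lab_injective_act].
- have IH' v : below v s -> rigid_inj (Some v) by apply: IH.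
  exact: rigid_limit Hl IH' (total_limit Hl IH').
Qed.

End IdentityRun.

Lemma run_legal (L X : Type) (W : wotype) (sq : W -> btwist L) (f0 : labelling L X) F :
  IsRun sq f0 F -> legal (F None) -> forall s, legal (F s).
Proof. by move=> R Hend s c /(run_nac_persists R) [d /Hend]. Qed.

Lemma convergent_solved_iff_univ (L : Type) (W : wotype) (sq : W -> btwist L) :
  convergent sq (@solved_lab L) <-> univ_convergent sq.
Proof.
have RG := the_run_IsRun sq (fun c : cell L => Some c).
split=> [[F [RF Hend]] | [G [RG' Hend]]].
  exists (the_run sq (fun c => Some c)); split=> // c.
  have [Hg _] := identity_run_rigid RF RG (run_legal RF Hend) None.
  by have [d ->] := rigid_total c Hg.
have RF := the_run_IsRun sq (@solved_lab L).
exists (the_run sq (@solved_lab L)); split=> // c.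
case E: (G None c) => [d|]; last by case: (Hend c).
by rewrite (run_relabel RF RG' E).
Qed.

(** * The final permutation *)

Lemma pigeonhole_nat (A : Type) (l : list A) (f : nat -> A) :
  (forall n, List.In (f n) l) -> exists i j, i < j <= length l /\ f i = f j.
Proof.
move=> Hf; apply: NNPP => Hno.
have Hinj : List.NoDup (List.map f (List.seq 0 (length l).+1)).
  apply: List.NoDup_map_NoDup_ForallPairs (List.seq_NoDup _ _) => i j.
  move=> /List.in_seq [_ Hi] /List.in_seq [_ Hj] Efij; apply: NNPP => Hij.
  move: Hi Hj => /ltP Hi /ltP Hj; case: (ltngtP i j) => [Hlt|Hlt|//].
  - by apply: Hno; exists i, j; rewrite Hlt -ltnS.
  - by apply: Hno; exists j, i; rewrite Hlt -ltnS.
have Hincl : List.incl (List.map f (List.seq 0 (length l).+1)) l.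
  by move=> _ /List.in_map_iff [n [<- _]].
have /leP := List.NoDup_incl_length Hinj Hincl.
by rewrite List.length_map List.length_seq ltnn.
Qed.

Section FinalPermutation.
Variables (L : Type) (W : wotype) (sq : W -> btwist L) (F : option W -> labelling L color).
Hypotheses (RF : IsRun sq (@solved_lab L) F) (F_legal : legal (F None)).

Let G := the_run sq (fun c : cell L => Some c).
Let RG := the_run_IsRun sq (fun c : cell L => Some c).

Lemma identity_run_end : rigid (G None) /\ lab_injective (G None).
Proof. exact: identity_run_rigid RF RG (run_legal RF F_legal) None. Qed.

Definition final_perm (c : cell L) : cell L := if G None c is Some d then d else c.

Lemma final_permE c : G None c = Some (final_perm c).
Proof. by have [d Hd] := rigid_total c (proj1 identity_run_end); rewrite /final_perm Hd. Qed.

Lemma final_perm_inj : injective final_perm.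
Proof.
move=> c1 c2 E; apply: (proj2 identity_run_end c1 c2 (final_perm c2));
  by rewrite final_permE ?E.
Qed.

Lemma iter_final_perm_rigid n c : exists2 h, List.In h rotations &
  cpt (iter n final_perm c) = sp_apply h (cpt c) /\ cax (iter n final_perm c) = sp_axis h (cax c).
Proof.
elim: n => [|n [h Hh [C A]]].
  by exists sp_id; rewrite /= ?sp_apply_id ?sp_axis_id //; apply: sp_id_rotation.
have [h' Hh' /(_ _ erefl) [d Gd [C' A']]] := proj1 identity_run_end (cpt (iter n final_perm c)).
exists (sp_comp h' h); first exact: sp_comp_rotation.
by rewrite iterS /final_perm Gd C' A' C A sp_apply_comp sp_axis_comp.
Qed.

(* The orbit of a cell is determined by the rotations carrying it, of which there are 24. *)
Lemma final_perm_cycle c : exists2 d, 0 < d <= 24 & iter d final_perm c = c.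
Proof.
have [hs Hhs] := choice (fun n h => List.In h rotations /\
  cpt (iter n final_perm c) = sp_apply h (cpt c) /\ cax (iter n final_perm c) = sp_axis h (cax c))
  (fun n => let: ex_intro2 h Hh E := iter_final_perm_rigid n c in ex_intro _ h (conj Hh E)).
have [i [j [/andP [Hij Hj] Eh]]] := pigeonhole_nat (fun n => proj1 (Hhs n)).
have Eit : iter i final_perm c = iter j final_perm c.
  have [_ [Ci Ai]] := Hhs i; have [_ [Cj Aj]] := Hhs j.
  by apply: cell_ext; rewrite ?Ci ?Cj ?Ai ?Aj Eh.
exists (j - i).
  by rewrite subn_gt0 Hij -size_rotations; apply: leq_trans (leq_subr _ _) _.
have iter_inj n : injective (iter n final_perm).
  by elim: n => //= n IH x y /final_perm_inj /IH.
by apply: (iter_inj i); rewrite -iterD subnKC ?Eit // ltnW.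
Qed.

Lemma run_end_final_perm (X : Type) (phi : cell L -> X) :
  exists R, IsRun sq (fun c => Some (phi c)) R /\ R None = (fun c => Some (phi (final_perm c))).
Proof.
exists (the_run sq (fun c => Some (phi c))); split; first exact: the_run_IsRun.
apply: functional_extensionality => c.
exact: run_relabel (the_run_IsRun _ _) RG (final_permE c).
Qed.

Lemma run_solved_end c : F None c = Some (solved (final_perm c)).
Proof. exact: run_relabel RF RG (final_permE c). Qed.

End FinalPermutation.

Section CyclePerm.
Variable d : nat.
Hypotheses (d_gt0 : 0 < d) (d_le24 : d <= 24).

Definition cycle_fun (i : 'I_24) : 'I_24 := if i < d then inord (i.+1 %% d) else i.

Lemma cycle_fun_val (i : 'I_24) : i < d -> cycle_fun i = i.+1 %% d :> nat.
Proof. by move=> Hi; rewrite /cycle_fun Hi inordK // (leq_trans _ d_le24) ?ltn_pmod. Qed.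

Lemma cycle_fun_inj : injective cycle_fun.
Proof.
have mod_lt n : n.+1 %% d < d by rewrite ltn_pmod.
move=> i j E; case Hi: (i < d); case Hj: (j < d).
- apply: val_inj; move/(congr1 (@nat_of_ord 24)): E; rewrite !cycle_fun_val // => /eqP.
  by rewrite -(addn1 i) -(addn1 j) eqn_modDr !modn_small // => /eqP.
- by move: (congr1 (@nat_of_ord 24) E); rewrite (cycle_fun_val Hi) /cycle_fun Hj => Ej;
    rewrite -Ej mod_lt in Hj.
- by move: (congr1 (@nat_of_ord 24) E); rewrite (cycle_fun_val Hj) /cycle_fun Hi => Ei;
    rewrite Ei mod_lt in Hi.
- by move: E; rewrite /cycle_fun Hi Hj.
Qed.

Definition cycle_perm : 'S_24 := perm cycle_fun_inj.

Lemma iter_cycle_perm n : iter n cycle_perm ord0 = n %% d :> nat.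
Proof.
elim: n => [|n IH]; first by rewrite mod0n.
by rewrite iterS permE cycle_fun_val IH ?ltn_pmod // -addn1 modnDml addn1.
Qed.

Lemma dvdn_kS24 : d %| kS24.
Proof.
apply: dvdn_trans (_ : #[cycle_perm]%g %| kS24); last exact: (biglcmn_sup cycle_perm).
have := iter_cycle_perm #[cycle_perm]%g.
by rewrite -permX expg_order perm1 => /esym /eqP.
Qed.

End CyclePerm.

Lemma kS24_gt0 : 0 < kS24.
Proof. by apply: (big_ind (fun x => 0 < x)) => // x y Hx Hy; rewrite lcmn_gt0 Hx. Qed.

Lemma iter_final_perm_kS24 (L : Type) (W : wotype) (sq : W -> btwist L) F c :
  IsRun sq (@solved_lab L) F -> legal (F None) -> iter kS24 (final_perm sq) c = c.
Proof.
move=> RF Hend; have [d /andP [Hd0 Hd24] Hc] := final_perm_cycle RF Hend c.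
rewrite -(divnK (dvdn_kS24 Hd0 Hd24)).
by elim: (kS24 %/ d) => [//|q IH]; rewrite mulSn iterD IH Hc.
Qed.

(** * Concatenation and repetition of basic sequences *)

Section OrdinalSum.
Variables W1 W2 : wotype.

Definition sum_lt (x y : W1 + W2) : Prop :=
  match x, y with
  | inl a, inl b => wo_lt a b
  | inl _, inr _ => True
  | inr _, inl _ => False
  | inr a, inr b => wo_lt a b
  end.

Lemma sum_lt_trans x y z : sum_lt x y -> sum_lt y z -> sum_lt x z.
Proof. by case: x => x; case: y => y; case: z => z //=; apply: wo_trans. Qed.

Lemma sum_lt_total x y : sum_lt x y \/ x = y \/ sum_lt y x.
Proof.
by case: x => x; case: y => y /=; auto;
  case: (wo_total x y) => [|[->|]]; auto.
Qed.

Lemma sum_lt_wf : well_founded sum_lt.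
Proof.
have Acc_inl a : Acc sum_lt (inl a).
  elim/(well_founded_ind (@wo_wf W1)): a => a IH.
  by constructor=> -[b|b] /= Hb; [apply: IH | case: Hb].
have Acc_inr b : Acc sum_lt (inr b).
  elim/(well_founded_ind (@wo_wf W2)): b => b IH.
  by constructor=> -[a|a] /= Ha; [apply: Acc_inl | apply: IH].
by case.
Qed.

Definition wo_sum : wotype := WO sum_lt_trans sum_lt_total sum_lt_wf.

End OrdinalSum.

Definition wo_empty : wotype.
Proof. by refine (@WO Empty_set (fun _ _ => False) _ _ _); case. Defined.

Section Concatenation.
Variables (L X : Type) (W1 W2 : wotype) (sq1 : W1 -> btwist L) (sq2 : W2 -> btwist L).
Variables (f0 : labelling L X) (R1 : option W1 -> labelling L X) (R2 : option W2 -> labelling L X).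
Hypotheses (RR1 : IsRun sq1 f0 R1) (RR2 : IsRun sq2 (R1 None) R2).

Local Notation S := (wo_sum W1 W2).

Definition sq_cat (x : S) : btwist L := match x with inl a => sq1 a | inr b => sq2 b end.

Definition run_cat (s : option S) : labelling L X :=
  match s with Some (inl a) => R1 (Some a) | Some (inr b) => R2 (Some b) | None => R2 None end.

Definition stage_inr (t : option W2) : option S := if t is Some b then Some (inr b) else None.

Lemma below_inl_inr a t : below (inl a : S) (stage_inr t).
Proof. by case: t. Qed.

Lemma below_inr b t : below (inr b : S) (stage_inr t) <-> below b t.
Proof. by case: t. Qed.

Lemma run_cat_inr t : run_cat (stage_inr t) = R2 t.
Proof. by case: t. Qed.

Let limit_clauses (s : option S) (c : cell L) : Prop :=
  (forall x, evconst run_cat s c x -> run_cat s c = x) /\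
  ((forall x, ~ evconst run_cat s c x) -> run_cat s c = None).

Lemma run_cat_limit (W : wotype) (sq : W -> btwist L) g0 (R : option W -> labelling L X) s' s c :
  IsRun sq g0 R -> is_limit s' -> run_cat s = R s' ->
  (forall x, evconst run_cat s c x <-> evconst R s' c x) -> limit_clauses s c.
Proof.
move=> R' Hl E Hiff; rewrite /limit_clauses E; split=> [x /Hiff /(run_lim R' Hl) //|Hno].
by apply: (run_lim_none R' Hl) => x /Hiff; apply: Hno.
Qed.

Lemma run_cat_limit_inl a : is_limit (Some (inl a : S)) -> forall c, limit_clauses (Some (inl a)) c.
Proof.
move=> [[[w|w] Hw] Hl] c //; apply: (run_cat_limit RR1 (s' := Some a)) => // [|x].
  split; first by exists w.
  by move=> v Hv; have [[u|u] [Hu Hvu]] := Hl (inl v) Hv; [exists u | case: Hu].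
split=> -[b [Hb Hc]].
  by case: b Hb Hc => // b Hb Hc; exists b; split=> // v; apply: (Hc (inl v)).
by exists (inl b); split=> // -[v|v] //; apply: Hc.
Qed.

Lemma run_cat_limit_inr t :
  is_limit (stage_inr t) -> (exists y, below y t) -> forall c, limit_clauses (stage_inr t) c.
Proof.
move=> [_ Hl] [y0 Hy0] c; apply: (run_cat_limit RR2 (s' := t)) => [||x].
- split; first by exists y0.
  move=> y /below_inr Hy; have [[v|v] [Hv Hyv]] := Hl (inr y) Hy => //.
  by exists v; split=> //; apply/below_inr.
- exact: run_cat_inr.
- split=> [[[a|b] [Hb Hc]]|[b [Hb Hc]]].
  + exists y0; split=> // v Hv _; exact: (Hc (inr v) (proj2 (below_inr v t) Hv)).
  + exists b; split=> [|v Hv]; first exact/below_inr.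
    by apply: (Hc (inr v)); apply/below_inr.
  + exists (inr b); split; first exact/below_inr.
    by case=> [v|v] Hv Hvb; [case: Hvb | apply: Hc => //; apply/below_inr].
Qed.

Lemma run_cat_limit_junction t :
  is_limit (stage_inr t) -> is_zero t -> forall c, limit_clauses (stage_inr t) c.
Proof.
move=> [[w0 Hw0] Hl] Hz c; have no_inr v : ~ below (inr v : S) (stage_inr t).
  by move/below_inr; apply: Hz.
apply: (run_cat_limit RR1 (s' := None)) => [||x].
- split; first by case: w0 Hw0 => [a|b /no_inr] //; exists a.
  move=> a _; have [[u|u] [Hu Hau]] := Hl (inl a) (below_inl_inr a t); first by exists u.
  by case: (no_inr u).
- by rewrite run_cat_inr (run_zero RR2 Hz).
- split=> [[[a|b] [Hb Hc]]|[b [Hb Hc]]].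
  + by exists a; split=> // v _ Hva; rewrite -(Hc (inl v) (below_inl_inr v t) Hva).
  + by case: (no_inr b).
  + exists (inl b); split=> [|[v|v] Hv Hvb]; first exact: below_inl_inr.
      exact: Hc.
    by case: (no_inr v).
Qed.

Lemma stage_cat_cases (s : option S) : (exists a, s = Some (inl a)) \/ exists t, s = stage_inr t.
Proof. by case: s => [[a|b]|]; [left; exists a | right; exists (Some b) | right; exists None]. Qed.

Lemma run_cat_zero s : is_zero s -> run_cat s = f0.
Proof.
case: (stage_cat_cases s) => [[a ->] Hz|[t ->] Hz].
  by apply: (run_zero RR1) => w Hw; apply: (Hz (inl w)).
rewrite run_cat_inr (run_zero RR2); last by move=> y /below_inr /Hz.
by apply: (run_zero RR1) => x _; apply: (Hz (inl x) (below_inl_inr x t)).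
Qed.

Lemma run_cat_pred s w : is_pred s w -> run_cat s = act (sq_cat w) (run_cat (Some w)).
Proof.
case: (stage_cat_cases s) => [[a ->]|[t ->]]; case: w => [x|y] [Hw Hm] //.
- by apply: (run_succ RR1); split=> // v Hv; apply: (Hm (inl v)).
- rewrite run_cat_inr (run_zero RR2) => [|y Hy].
    by apply: (run_succ RR1); split=> // v _; apply: (Hm (inl v) (below_inl_inr v t)).
  by apply: (Hm (inr y)) => //; apply/below_inr.
- rewrite run_cat_inr; apply: (run_succ RR2); split=> [|v Hv]; first exact/below_inr.
  by apply: (Hm (inr v)); apply/below_inr.
Qed.

Lemma IsRun_cat : IsRun sq_cat f0 run_cat.
Proof.
apply: IsRun_intro => [||s Hl]; [exact: run_cat_zero | exact: run_cat_pred |].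
case: (stage_cat_cases s) Hl => [[a ->]|[t ->] Hl]; first exact: run_cat_limit_inl.
case: (classic (exists y, below y t)) => [Hne|Hz]; first exact: run_cat_limit_inr Hl Hne.
by apply: run_cat_limit_junction Hl _ => y Hy; apply: Hz; exists y.
Qed.

End Concatenation.

Section Repetition.
Variables (L : Type) (W : wotype) (sq : W -> btwist L).

Fixpoint wo_rep (n : nat) : wotype := if n is n'.+1 then wo_sum (wo_rep n') W else wo_empty.

Fixpoint sq_rep (n : nat) : wo_rep n -> btwist L :=
  match n return wo_rep n -> btwist L with
  | 0 => fun e => match e with end
  | n'.+1 => sq_cat (@sq_rep n') sq
  end.

Fixpoint rep_index (n : nat) : wo_rep n -> nat * W :=
  match n return wo_rep n -> nat * W with
  | 0 => fun e => match e with end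
  | n'.+1 => fun x => match x with inl a => @rep_index n' a | inr b => (n', b) end
  end.

Lemma rep_index_lt n x : (@rep_index n x).1 < n.
Proof. by elim: n x => [[]|n IH [a|b]] //=; apply: leq_trans (IH a) _. Qed.

Lemma len_le_mul_rep n : len_le_mul (wo_rep n) W n.
Proof.
exists (@rep_index n); split=> [|x y]; first exact: rep_index_lt.
elim: n x y => [[]|n IH] [a|a] [b|b] //= H; [exact: IH | left; exact: rep_index_lt | by right].
Qed.

Lemma run_rep (X : Type) (pi : cell L -> cell L) (phi : cell L -> X) n :
  (forall psi : cell L -> X, exists R, IsRun sq (fun c => Some (psi c)) R /\
     R None = (fun c => Some (psi (pi c)))) ->
  exists R, IsRun (@sq_rep n) (fun c => Some (phi c)) R /\
    R None = (fun c => Some (phi (iter n pi c))).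
Proof.
move=> Hrun; elim: n => [|n [R1 [RR1 E1]]].
  by exists (fun _ c => Some (phi c)); split=> //; apply: IsRun_intro => // s [[[]]].
have [R2 [RR2 E2]] := Hrun (fun c => phi (iter n pi c)); rewrite -E1 in RR2.
exists (run_cat R1 R2); split; first exact: IsRun_cat.
by rewrite /= E2; apply: functional_extensionality => c; rewrite -iterSr.
Qed.

End Repetition.

Theorem theorem4p3 (L : Type) (HL : infinite_type L) :
  (forall (W : wotype) (sq : W -> btwist L),
      convergent sq (@solved_lab L) <-> univ_convergent sq) /\
  (forall (W : wotype) (sq : W -> btwist L) (f : cell L -> color),
      reaches sq (@solved_lab L) (fun c => Some (f c)) ->
      exists (W' : wotype) (sq' : W' -> btwist L),
        len_le_mul W' W (kS24 - 1) /\
        reaches sq' (fun c => Some (f c)) (@solved_lab L)).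
Proof.
split=> [W sq|W sq f [F [RF EF]]]; first exact: convergent_solved_iff_univ.
have F_legal : legal (F None) by rewrite EF.
have Ef c : f c = solved (final_perm sq c).
  by have := run_solved_end RF F_legal c; rewrite EF => -[].
exists (wo_rep W (kS24 - 1)), (@sq_rep L W sq (kS24 - 1)); split; first exact: len_le_mul_rep.
have [R [RR ER]] := run_rep f (kS24 - 1) (run_end_final_perm RF F_legal (X := color)).
exists R; split=> //; rewrite ER; apply: functional_extensionality => c.
by rewrite Ef -iterS subn1 prednK ?kS24_gt0 // (iter_final_perm_kS24 _ RF F_legal).
Qed.
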